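(* Let $S$ be a semigroup with finite $\mathcal{R}$-height, and let $A$ be an ideal of $S$. Then $\mathrm{H}_{\mathcal{R}}(A)\leq \mathrm{H}_{\mathcal{R}}(S)$.
   Context: For a semigroup $S$, $S^1$ denotes $S$ with an identity adjoined if necessary. Green's preorder: $a\leq_{\mathcal{R}} b$ iff $aS^1\subseteq bS^1$; $\mathcal{R}$ is the associated equivalence; the $\mathcal{R}$-height $\mathrm{H}_{\mathcal{R}}$ of a semigroup is the supremum of the cardinalities of chains in its poset of $\mathcal{R}$-classes. An ideal is a non-empty subset $A$ with $SA\cup AS\subseteq A$; $\mathrm{H}_{\mathcal{R}}(A)$ is computed in $A$ itself. *)

(* Green's R-preorder is
   computed relative to a carrier predicate P (P = everything for S itself,
   P = A for the ideal A viewed as a semigroup in its own right). *)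
From Stdlib Require Import List Arith Sorted.
Import ListNotations.

Section Green.
Variable T : Type.
Variable mul : T -> T -> T.

Definition associative_op : Prop :=
  forall x y z, mul x (mul y z) = mul (mul x y) z.

Definition is_ideal (A : T -> Prop) : Prop :=
  (exists a, A a) /\ (forall s a, A a -> A (mul s a) /\ A (mul a s)).

(* a <=_R b in the semigroup with carrier P:  a P^1 ⊆ b P^1, i.e.
   a = b or a = b x for some x in P. *)
Definition Rle (P : T -> Prop) (a b : T) : Prop :=
  a = b \/ exists x, P x /\ a = mul b x.

Definition Rlt (P : T -> Prop) (a b : T) : Prop :=
  Rle P a b /\ ~ Rle P b a.

(* A finite chain of R-classes of the semigroup with carrier P, given by
   representatives listed in strictly increasing order; its cardinality is
   the length of the list. *)
Definition R_chain (P : T -> Prop) (l : list T) : Prop :=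
  Forall P l /\ StronglySorted (Rlt P) l.

Definition R_height_le (P : T -> Prop) (n : nat) : Prop :=
  forall l, R_chain P l -> length l <= n.

Definition R_height (P : T -> Prop) (h : nat) : Prop :=
  (exists l, R_chain P l /\ length l = h) /\ R_height_le P h.
End Green.

Arguments associative_op {T}.
Arguments is_ideal {T}.
Arguments Rle {T}.
Arguments Rlt {T}.
Arguments R_chain {T}.
Arguments R_height_le {T}.
Arguments R_height {T}.

From Stdlib Require Import List Arith Sorted.

(* A strict R-relation a <_R b in the ideal A survives in S: a = b x with
   x in A, and if also b = a s in S^1 then b = a (s x s) with s x s in A.
   Hence every R-chain of A is an R-chain of S. *)

Section IdealChains.
Variable T : Type.
Variable mul : T -> T -> T.
Hypothesis Hassoc : associative_op mul.
Variable A : T -> Prop.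
Hypothesis HA : is_ideal mul A.

Let S : T -> Prop := fun _ => True.

Lemma ideal_sandwich s x : A x -> A (mul (mul s x) s).
Proof.
  destruct HA as [_ Hclosed]. intros Hx.
  apply (Hclosed s (mul s x)), (Hclosed s x), Hx.
Qed.

Lemma Rle_ideal_of_Rle b x :
  A x -> Rle mul S b (mul b x) -> Rle mul A b (mul b x).
Proof.
  intros Hx [E | [s [_ E]]].
  - now left.
  - right. exists (mul (mul s x) s). split.
    + now apply ideal_sandwich.
    + rewrite Hassoc, Hassoc, <- E. exact E.
Qed.

Lemma Rlt_ideal_Rlt a b : Rlt mul A a b -> Rlt mul S a b.
Proof.
  intros [Hab Hba].
  destruct Hab as [-> | [x [Hx ->]]].
  - exfalso. apply Hba. now left.
  - split.
    + right. now exists x.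
    + intros Hba_S. apply Hba, Rle_ideal_of_Rle; assumption.
Qed.

Lemma R_chain_ideal l : R_chain mul A l -> R_chain mul S l.
Proof.
  intros [_ Hsorted]. split.
  - apply Forall_forall. now intros.
  - induction Hsorted as [| a l _ IH Hhead]; constructor; [exact IH |].
    eapply Forall_impl; [apply Rlt_ideal_Rlt | exact Hhead].
Qed.

End IdealChains.

Theorem corollary3p15 (T : Type) (mul : T -> T -> T)
  (Hassoc : associative_op mul) (A : T -> Prop) (HA : is_ideal mul A)
  (h : nat) (HS : R_height mul (fun _ => True) h) :
  R_height_le mul A h.
Proof.
  destruct HS as [_ Hbound].
  intros l Hchain.
  apply Hbound, (R_chain_ideal T mul Hassoc A HA), Hchain.
Qed.
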